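(* Let $1\le M\le N$ be integers and let $i_1,\dots,i_N$, $j_1,\dots,j_N$, $k_1,\dots,k_M$, $l_1,\dots,l_M$ be mode indices. Then \begin{align*} &\langle\varphi_{i_1}\dots\varphi_{i_N}|\,a^\dagger_{k_1}\cdots a^\dagger_{k_M}a_{l_1}\cdots a_{l_M}\,|\varphi_{j_1}\dots\varphi_{j_N}\rangle\\ &=\frac{(N-M)!}{N!}(M!)^2\sum_{\substack{1\le\alpha_1<\dots<\alpha_M\le N\\ 1\le\beta_1<\dots<\beta_M\le N}}\delta_{k_1\dots k_M;\,i_{\alpha_1}\dots i_{\alpha_M}}\,\delta_{l_1\dots l_M;\,j_{\beta_1}\dots j_{\beta_M}}\,\delta_{\{i_1\dots i_N\}\setminus\{i_{\alpha_1}\dots i_{\alpha_M}\};\,\{j_1\dots j_N\}\setminus\{j_{\beta_1}\dots j_{\beta_M}\}} . \end{align*}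
   Context: Let $\{|\varphi_i\rangle\}$ be an orthonormal basis of a single-particle Hilbert space, and let $a_i,a_i^\dagger$ be the corresponding bosonic annihilation and creation operators on Fock space, satisfying $[a_i,a_j^\dagger]=\delta_{ij}$, $[a_i^\dagger,a_j^\dagger]=0$, $[a_i,a_j]=0$; $|0\rangle$ is the vacuum. Symmetrized $N$-particle states are $|\varphi_{i_1}\dots\varphi_{i_N}\rangle=\frac{1}{\sqrt{N!}}a_{i_1}^\dagger\cdots a_{i_N}^\dagger|0\rangle$. The permutation-invariant Kronecker delta of two index lists of equal length $L$ is $\delta_{i_1\dots i_L;j_1\dots j_L}:=\frac{1}{L!}\sum_{\sigma\in S_L}\prod_{k=1}^L\delta_{i_k j_{\sigma(k)}}$ (equal to $1$ for $L=0$). The list $\{i_1\dots i_N\}\setminus\{i_{\alpha_1}\dots i_{\alpha_M}\}$ is obtained from $i_1,\dots,i_N$ by removing the entries at positions $\alpha_1,\dots,\alpha_M$, and similarly for the $j$'s. *)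

(* Concrete model of the bosonic Fock space in the
   occupation-number basis.  A basis configuration
   is a multiset of modes, represented by a seq nat up to permutation
   (perm_eq); a Fock vector is a finite formal linear combination of
   configurations, represented as a seq of (coefficient, configuration). *)
From HB Require Import structures.
From mathcomp Require Import all_boot all_order all_algebra all_fingroup.
Set Implicit Arguments. Unset Strict Implicit. Unset Printing Implicit Defensive.
Import Order.TTheory GRing.Theory Num.Theory.
Local Open Scope ring_scope.

Definition fvec (R : rcfType) := seq (R * seq nat).

Definition adag (R : rcfType) (k : nat) (v : fvec R) : fvec R :=
  [seq (x.1 * Num.sqrt ((count_mem k x.2).+1)%:R, k :: x.2) | x <- v].

(* a_k |n> = sqrt(n_k) |n - e_k>  (coefficient 0 if n_k = 0) *)
Definition ann (R : rcfType) (k : nat) (v : fvec R) : fvec R :=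
  [seq (x.1 * Num.sqrt (count_mem k x.2)%:R, rem k x.2) | x <- v].

Definition vac (R : rcfType) : fvec R := [:: (1, [::])].

Definition fscale (R : rcfType) (c : R) (v : fvec R) : fvec R :=
  [seq (c * x.1, x.2) | x <- v].

(* inner product: occupation-number configurations are orthonormal;
   all coefficients are real here so no conjugation is needed *)
Definition fdot (R : rcfType) (u v : fvec R) : R :=
  \sum_(x <- u) \sum_(y <- v) x.1 * y.1 * (perm_eq x.2 y.2)%:R.

Definition adags (R : rcfType) (ks : seq nat) (v : fvec R) : fvec R :=
  foldr (@adag R) v ks.
Definition anns (R : rcfType) (ls : seq nat) (v : fvec R) : fvec R :=
  foldr (@ann R) v ls.

Definition sym_state (R : rcfType) (N : nat) (i : 'I_N -> nat) : fvec R :=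
  fscale (Num.sqrt (N`!)%:R)^-1 (adags [seq i a | a <- enum 'I_N] (vac R)).

Definition pdelta (R : rcfType) (s t : seq nat) : R :=
  let L := size s in
  ((L`!)%:R)^-1 *
    \sum_(sg : 'S_L) \prod_(q < L) (nth 0%N s q == nth 0%N t (sg q))%:R.

Definition sublist (N : nat) (i : 'I_N -> nat) (A : {set 'I_N}) : seq nat :=
  [seq i a | a <- enum A].

(* Every vector in sight is a single occupation-number configuration, so both
   sides have closed forms.  Let mfact s be the product of the factorials of
   the multiplicities in the word s (the number of permutations of positions
   fixing s) and [s ~ t] the indicator that t is a permutation of s.  The
   state |i> is sqrt (mfact i / N!) times the configuration i, and each ladder
   operator contributes the square root of an occupation number, so the left
   side is [i ~ k ++ (j - l)] * w_k * w_l * mfact (j - l) / N!, where j - l is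
   the multiset difference and w_k, w_l collect the occupation numbers met by
   the creators and the annihilators.  On the right,
   delta(s; t) = [s ~ t] * mfact s / |s|!, and the double sum over A, B
   collapses by the splitting identity
     sum_A [K ~ u_A] [u_(A^c) ~ D] mfact K mfact D = [K ++ D ~ u] mfact u,
   used first over the positions of j and then over those of i. *)

From HB Require Import structures.
From mathcomp Require Import all_boot all_order all_algebra all_fingroup.
From mathcomp Require Import ring zify.
Import Order.TTheory GRing.Theory Num.Theory.

Set Implicit Arguments.
Unset Strict Implicit.
Unset Printing Implicit Defensive.

Fixpoint masks n : seq bitseq :=
  if n is n'.+1 then [seq true :: m | m <- masks n'] ++ [seq false :: m | m <- masks n']
  else [:: [::]].

Lemma mem_masks n m : (m \in masks n) = (size m == n).
Proof.
have mem_map_cons c b m' s : (b :: m' \in [seq c :: x | x <- s]) = (b == c) && (m' \in s).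
  by apply/mapP/andP => [[x xs [-> ->]]|[/eqP -> m's]]; [split | exists m'].
elim: n m => [|n IH] [|b m] //=; rewrite mem_cat.
  by apply/negbTE; rewrite negb_or; apply/andP; split; apply/mapP => -[].
by rewrite !mem_map_cons eqSS -IH; case: b; rewrite ?orbF.
Qed.

Lemma masks_uniq n : uniq (masks n).
Proof.
have cons_inj (c : bool) : injective (cons c) by move=> x y [].
elim: n => //= n IH; rewrite cat_uniq !map_inj_uniq // IH andbT.
by apply/hasPn => _ /mapP[m _ ->]; apply/mapP => -[].
Qed.

Section Multisets.

Variable T : eqType.
Implicit Types (x : T) (s t u K D ks ls ii jj : seq T) (m : bitseq).

Fixpoint mfact s : nat :=
  if s is x :: s' then (count_mem x s').+1 * mfact s' else 1.

Lemma mfact_prod s u :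
  uniq u -> {subset s <= u} -> mfact s = \prod_(x <- u) (count_mem x s)`!.
Proof.
elim: s => [|x s IH] Uu Su /=.
  by rewrite big1_seq // => y _; rewrite count_pred0.
have xu : x \in u by apply: Su; rewrite mem_head.
rewrite IH // => [|y ys]; last by apply: Su; rewrite inE ys orbT.
rewrite (bigD1_seq x) //= (bigD1_seq x (r := u)) //= eqxx add1n factS mulnA.
by congr (_ * _); apply: eq_bigr => y /negbTE yx; rewrite eq_sym yx.
Qed.

Lemma mfact_perm s t : perm_eq s t -> mfact s = mfact t.
Proof.
move=> st; have U := undup_uniq (s ++ t).
rewrite (mfact_prod U) ?(mfact_prod U) => [|y yt|y ys]; last 2 first.
- by rewrite mem_undup mem_cat yt orbT.
- by rewrite mem_undup mem_cat ys.
by apply: eq_bigr => y _; move/seq.permP: st => ->.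
Qed.

Lemma mfact_rem x s : x \in s -> mfact s = count_mem x s * mfact (rem x s).
Proof.
move=> xs; rewrite (mfact_perm (perm_to_rem xs)) /=.
by rewrite (seq.permP (perm_to_rem xs)) /= eqxx add1n.
Qed.

Lemma perm_cons_rem x s t : perm_eq s (x :: t) = (x \in s) && perm_eq (rem x s) t.
Proof.
have [xs|xs] := boolP (x \in s); first by rewrite (permPl (perm_to_rem xs)) perm_cons.
by apply/negbTE/negP => /perm_mem /(_ x); rewrite mem_head (negbTE xs).
Qed.

Definition rems ls u : seq T := foldr (@rem T) u ls.

Fixpoint adags_weight ks u : nat :=
  if ks is k :: ks' then (count_mem k (ks' ++ u)).+1 * adags_weight ks' u else 1.

Fixpoint anns_weight ls u : nat :=
  if ls is l :: ls' then count_mem l (rems ls' u) * anns_weight ls' u else 1.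

Lemma adags_weightE ks u : adags_weight ks u * mfact u = mfact (ks ++ u).
Proof. by elim: ks => [|k ks IH] /=; rewrite ?mul1n // -mulnA IH. Qed.

Lemma adags_weight_nil ks : adags_weight ks [::] = mfact ks.
Proof. by rewrite -(muln1 (adags_weight ks [::])) (adags_weightE ks [::]) cats0. Qed.

Lemma anns_weightE ls u :
  anns_weight ls u != 0 -> anns_weight ls u * mfact (rems ls u) = mfact u.
Proof.
elim: ls => [|l ls IH] /=; first by rewrite mul1n.
rewrite muln_eq0 negb_or => /andP[l_in /IH <-].
rewrite -lt0n -has_count has_pred1 in l_in.
by rewrite (mfact_rem l_in); ring.
Qed.

Lemma perm_cat_rems ls D u :
  perm_eq (ls ++ D) u = (anns_weight ls u != 0) && perm_eq D (rems ls u).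
Proof.
elim: ls D => [|l ls IH] D //=.
have /permPl -> : perm_eq (l :: ls ++ D) (ls ++ l :: D).
  by rewrite -cat1s perm_catCA.
rewrite IH [perm_eq (l :: D) _]perm_sym perm_cons_rem muln_eq0 negb_or.
rewrite -(lt0n (count_mem l _)) -has_count has_pred1 [perm_eq (rem _ _) D]perm_sym.
by rewrite andbCA andbA.
Qed.

Lemma perm_cat_cons x K D u :
  x \in K -> perm_eq (K ++ D) (x :: u) = perm_eq (rem x K ++ D) u.
Proof.
move=> xK; have /permPl -> : perm_eq (K ++ D) (x :: rem x K ++ D).
  by rewrite -cat_cons perm_cat2r perm_to_rem.
by rewrite perm_cons.
Qed.

Lemma sum_masks_split u K D :
  \sum_(m <- masks (size u))
     perm_eq K (mask m u) * perm_eq (mask (map negb m) u) D * mfact K * mfact D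
  = perm_eq (K ++ D) u * mfact u.
Proof.
elim: u K D => [|x u IH] K D /=.
  rewrite big_seq1 /=.
  have perm_nil s : perm_eq s [::] = nilp s by apply/perm_nilP/nilP.
  by case: K => [|a K]; case: D => [|b D];
    rewrite //= ?perm_nil ?(perm_sym [::]) ?perm_nil ?muln0.
rewrite big_cat !big_map /=.
have -> : \sum_(m <- masks (size u))
    perm_eq K (x :: mask m u) * perm_eq (mask (map negb m) u) D * mfact K * mfact D
    = count_mem x K * (perm_eq (K ++ D) (x :: u) * mfact u).
  have [xK|xK] := boolP (x \in K); last first.
    by rewrite (count_memPn xK) big1_seq // => m _; rewrite perm_cons_rem (negbTE xK).
  rewrite perm_cat_cons // -IH big_distrr; apply: eq_bigr => m _.
  by rewrite perm_cons_rem xK (mfact_rem xK) /=; ring.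
have -> : \sum_(m <- masks (size u))
    perm_eq K (mask m u) * perm_eq (x :: mask (map negb m) u) D * mfact K * mfact D
    = count_mem x D * (perm_eq (K ++ D) (x :: u) * mfact u).
  have [xD|xD] := boolP (x \in D); last first.
    rewrite (count_memPn xD) big1_seq // => m _.
    by rewrite [perm_eq (x :: _) D]perm_sym perm_cons_rem (negbTE xD) muln0.
  rewrite (perm_catC K D) perm_cat_cons // (perm_catC _ K) -IH big_distrr.
  apply: eq_bigr => m _.
  rewrite [perm_eq _ D]perm_sym perm_cons_rem xD [perm_eq _ (rem x D)]perm_sym.
  by rewrite (mfact_rem xD) /=; ring.
rewrite -mulnDl.
have [KDu|] := boolP (perm_eq (K ++ D) (x :: u)); last by rewrite !mul0n muln0.
move/seq.permP: KDu => /(_ (pred1 x)); rewrite count_cat /= eqxx add1n => ->.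
by rewrite !mul1n.
Qed.

(* N! times the summand of the right-hand side at the subsets with masks m, m'. *)
Definition split_weight ii jj ks ls m m' : nat :=
  perm_eq ks (mask m ii) * perm_eq ls (mask m' jj) *
  perm_eq (mask (map negb m) ii) (mask (map negb m') jj) *
  mfact ks * mfact ls * mfact (mask (map negb m) ii).

Lemma sum_split_weight n ii jj ks ls : size ii = n -> size jj = n ->
  \sum_(m <- masks n) \sum_(m' <- masks n) split_weight ii jj ks ls m m'
  = perm_eq ii (ks ++ rems ls jj) *
    (adags_weight ks (rems ls jj) * anns_weight ls jj * mfact (rems ls jj)).
Proof.
move=> <- jj_n; set r := rems ls jj.
have inner m : \sum_(m' <- masks (size ii)) split_weight ii jj ks ls m m'
    = perm_eq ks (mask m ii) * mfact ks *
      (perm_eq (ls ++ mask (map negb m) ii) jj * mfact jj).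
  rewrite -jj_n -sum_masks_split big_distrr; apply: eq_bigr => m' _.
  by rewrite /split_weight [perm_eq (mask _ ii) _]perm_sym /=; ring.
under eq_bigr do rewrite inner perm_cat_rems.
have [w0|w_neq0] := eqVneq (anns_weight ls jj) 0.
  by rewrite w0 !(muln0, mul0n) big1 // => m _; rewrite /= mul0n muln0.
have mfact_jj := anns_weightE w_neq0; rewrite -/r in mfact_jj.
rewrite (eq_bigr (fun m => anns_weight ls jj *
    (perm_eq ks (mask m ii) * perm_eq (mask (map negb m) ii) r * mfact ks * mfact r)));
  last first.
  by move=> m _; rewrite -mfact_jj [perm_eq (mask _ ii) r]perm_sym /=; ring.
rewrite -big_distrr /= sum_masks_split perm_sym.
have [ii_perm|] := boolP (perm_eq ii (ks ++ r)); last by rewrite !mul0n muln0.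
by rewrite (mfact_perm ii_perm) -adags_weightE; ring.
Qed.

Lemma mfact_weights_sq ii jj ks ls : perm_eq ii (ks ++ rems ls jj) ->
  mfact ii * mfact jj * anns_weight ls jj * adags_weight ks (rems ls jj)
  = (adags_weight ks (rems ls jj) * anns_weight ls jj * mfact (rems ls jj)) ^ 2.
Proof.
move=> /mfact_perm ->; rewrite -adags_weightE.
have [->|/anns_weightE <-] := eqVneq (anns_weight ls jj) 0.
  by rewrite !(muln0, mul0n).
by ring.
Qed.

End Multisets.

Lemma big_lift_perm (R : Type) (idx : R) (op : Monoid.com_law idx) n
    (F : 'S_n.+1 -> R) :
  \big[op/idx]_(s : 'S_n.+1) F s
  = \big[op/idx]_(p : 'I_n.+1) \big[op/idx]_(s : 'S_n) F (lift_perm ord0 p s).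
Proof.
rewrite (partition_big (fun s : 'S_n.+1 => s ord0) xpredT) //=.
apply: eq_bigr => p _; rewrite (reindex (lift_perm ord0 p)); last first.
  pose ulsf i (s : 'S_n.+1) k := odflt k (unlift (s i) (s (lift i k))).
  have ulsfK i (s : 'S_n.+1) k : lift (s i) (ulsf i s k) = s (lift i k).
    rewrite /ulsf; have:= neq_lift i k.
    by rewrite -(can_eq (permK s)) => /unlift_some[] ? ? ->.
  have inj_ulsf : injective (ulsf ord0 _).
    move=> s; apply: can_inj (ulsf (s ord0) s^-1%g) _ => k'.
    by rewrite {1}/ulsf ulsfK !permK liftK.
  exists (fun s => perm (inj_ulsf s)) => [s _ | s].
    by apply/permP => k'; rewrite permE /ulsf lift_perm_lift lift_perm_id liftK.
  move/(s _ =P _) => s0; apply/permP => k.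
  case: (unliftP ord0 k) => [k'|] ->; rewrite ?lift_perm_id //.
  by rewrite lift_perm_lift -s0 permE ulsfK.
by apply: eq_bigl => s; rewrite lift_perm_id eqxx.
Qed.

Section PermMatching.

Variables (T : eqType) (x0 : T).
Implicit Types (s t : seq T).

Lemma count_mem_nth x t : \sum_(p < size t) (x == nth x0 t p) = count_mem x t.
Proof.
elim: t => [|y t IH] /=; first by rewrite big_ord0.
by rewrite big_ord_recl /= -IH eq_sym.
Qed.

Definition drop_at p t := take p t ++ drop p.+1 t.

Lemma size_drop_at p t : p < size t -> size (drop_at p t) = (size t).-1.
Proof. by move=> pt; rewrite size_cat size_take pt size_drop; lia. Qed.

Lemma nth_drop_at p t q : p < size t -> nth x0 (drop_at p t) q = nth x0 t (bump p q).
Proof.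
move=> pt; rewrite nth_cat size_take pt /bump.
case: ltnP => [qp|pq]; first by rewrite nth_take // add0n.
by rewrite nth_drop; congr nth; lia.
Qed.

Lemma perm_drop_at p t : p < size t -> perm_eq t (nth x0 t p :: drop_at p t).
Proof.
move=> pt; rewrite -{1}(cat_take_drop p t) (drop_nth x0) //.
by rewrite /drop_at -cat1s perm_catCA.
Qed.

Lemma sum_perm_matching n s t : size s = n -> size t = n ->
  \sum_(sg : 'S_n) \prod_(q < n) (nth x0 s q == nth x0 t (sg q))
  = perm_eq s t * mfact s.
Proof.
elim: n s t => [|n IH] [|x s] t //=.
  case: t => // _ _; rewrite (eq_bigr (fun=> 1)) ?sum1_card ?card_Sn //.
  by move=> sg _; rewrite big_ord0.
move=> [sn] tn.
rewrite big_lift_perm.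
have match_first (p : 'I_n.+1) : \sum_(sg : 'S_n)
    \prod_(q < n.+1) (nth x0 (x :: s) q == nth x0 t (lift_perm ord0 p sg q))
    = (x == nth x0 t p) * (perm_eq (x :: s) t * mfact s).
  have pt : p < size t by rewrite tn.
  rewrite (eq_bigr (fun sg : 'S_n => (x == nth x0 t p) *
      \prod_(q < n) (nth x0 s q == nth x0 (drop_at p t) (sg q)))); last first.
    move=> sg _; rewrite big_ord_recl lift_perm_id /=; congr (_ * _).
    by apply: eq_bigr => q _; rewrite lift_perm_lift nth_drop_at.
  rewrite -big_distrr /= IH //; last by rewrite size_drop_at tn.
  have [xp|] := eqVneq x (nth x0 t p); last by rewrite !mul0n.
  by rewrite (permPr (perm_drop_at pt)) -xp perm_cons.
rewrite (eq_bigr _ (fun p _ => match_first p)) -big_distrl /= -tn count_mem_nth.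
have [st|] := boolP (perm_eq (x :: s) t); last by rewrite !mul0n muln0.
by rewrite -(seq.permP st) /= eqxx add1n !mul1n.
Qed.

End PermMatching.

Lemma size_map_enum_ord (U : Type) n (f : 'I_n -> U) :
  size [seq f a | a <- enum 'I_n] = n.
Proof. by rewrite size_map size_enum_ord. Qed.

Definition mask_of_set N (A : {set 'I_N}) : bitseq := [seq a \in A | a <- enum 'I_N].

Lemma mask_of_set_inj N : injective (@mask_of_set N).
Proof.
move=> A B AB; apply/setP => a.
have := congr1 (fun m => a \in mask m (enum 'I_N)) AB.
by rewrite /mask_of_set -!filter_mask !mem_filter /= -enumT mem_enum !andbT.
Qed.

Lemma mask_of_setC N (A : {set 'I_N}) :
  mask_of_set (~: A) = map negb (mask_of_set A).
Proof. by rewrite /mask_of_set -map_comp; apply: eq_map => a /=; rewrite in_setC. Qed.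

Lemma big_sets_masks (R : Type) (idx : R) (op : Monoid.com_law idx) N
    (F : bitseq -> R) :
  \big[op/idx]_(A : {set 'I_N}) F (mask_of_set A) = \big[op/idx]_(m <- masks N) F m.
Proof.
rewrite -(big_map (@mask_of_set N) xpredT F); apply/perm_big/uniq_perm => [||m].
- by rewrite map_inj_uniq ?index_enum_uniq //; exact: mask_of_set_inj.
- exact: masks_uniq.
rewrite mem_masks; apply/mapP/idP => [[A _ ->]|/eqP mN].
  by rewrite size_map size_enum_ord.
exists [set a : 'I_N | nth false m a]; first by rewrite mem_index_enum.
apply: (@eq_from_nth _ false); first by rewrite size_map size_enum_ord.
move=> q; rewrite mN => qN.
by rewrite (nth_map (Ordinal qN)) ?size_enum_ord // inE nth_enum_ord.
Qed.

Lemma sublist_mask N (i : 'I_N -> nat) A :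
  sublist i A = mask (mask_of_set A) [seq i a | a <- enum 'I_N].
Proof.
rewrite /sublist /mask_of_set -map_mask -filter_mask; congr map.
by rewrite enumT /enum_mem; apply: eq_filter.
Qed.

Lemma size_sublist N (i : 'I_N -> nat) A : size (sublist i A) = #|A|.
Proof. by rewrite size_map cardE. Qed.

Section FockAction.

Variable R : rcfType.
Local Open Scope ring_scope.

Lemma sqrt_natM (x y : nat) :
  Num.sqrt x%:R * Num.sqrt y%:R = Num.sqrt (x * y)%:R :> R.
Proof. by rewrite natrM sqrtrM ?ler0n. Qed.

Lemma adags_single ks (c : R) u :
  adags ks [:: (c, u)] = [:: (c * Num.sqrt (adags_weight ks u)%:R, ks ++ u)].
Proof.
elim: ks => [|k ks IH] /=; first by rewrite sqrtr1 mulr1.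
by rewrite /adags /= -/(adags ks _) IH /adag /= -mulrA sqrt_natM mulnC.
Qed.

Lemma anns_single ls (c : R) u :
  anns ls [:: (c, u)] = [:: (c * Num.sqrt (anns_weight ls u)%:R, rems ls u)].
Proof.
elim: ls => [|l ls IH] /=; first by rewrite sqrtr1 mulr1.
by rewrite /anns /= -/(anns ls _) IH /ann /= -mulrA sqrt_natM mulnC.
Qed.

Lemma fdot_single (a b : R) s t :
  fdot [:: (a, s)] [:: (b, t)] = a * b * (perm_eq s t)%:R.
Proof. by rewrite /fdot !big_seq1. Qed.

Lemma pdeltaE s t : size t = size s ->
  pdelta R s t = (perm_eq s t * mfact s)%:R / ((size s)`!)%:R.
Proof.
move=> ts; rewrite /pdelta mulrC -(sum_perm_matching 0 erefl ts) natr_sum.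
by congr (_ * _); apply: eq_bigr => sg _; rewrite natr_prod.
Qed.

Lemma fact_neq0 n : (n`!)%:R != 0 :> R.
Proof. by rewrite pnatr_eq0 -lt0n fact_gt0. Qed.

End FockAction.

Section MatrixElement.

Local Open Scope ring_scope.

Variables (R : rcfType) (N M : nat) (i j : 'I_N -> nat) (k l : 'I_M -> nat).

Local Notation ii := [seq i a | a <- enum 'I_N].
Local Notation jj := [seq j a | a <- enum 'I_N].
Local Notation ks := [seq k a | a <- enum 'I_M].
Local Notation ls := [seq l a | a <- enum 'I_M].

Lemma matrix_elementE :
  fdot (sym_state R i) (adags ks (anns ls (sym_state R j)))
  = (N`!%:R)^-1 * (perm_eq ii (ks ++ rems ls jj) *
      (adags_weight ks (rems ls jj) * anns_weight ls jj * mfact (rems ls jj)))%:R.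
Proof.
rewrite /sym_state /vac !adags_single /fscale /= anns_single adags_single fdot_single.
rewrite !cats0 !adags_weight_nil.
set s := Num.sqrt _; have s2 : s * s = N`!%:R by rewrite -expr2 sqr_sqrtr ?ler0n.
have [P|] := boolP (perm_eq ii _); last by rewrite !(mulr0, mul0n).
set Y := (_ * _ * _)%N; rewrite mul1n -[Y%:R]normr_nat -sqrtr_sqr -natrX.
rewrite -(mfact_weights_sq P).
by rewrite -!sqrt_natM -s2 invfM mulr1; ring.
Qed.

Lemma split_weight_sets_neq0 (A B : {set 'I_N}) :
  split_weight ii jj ks ls (mask_of_set A) (mask_of_set B) != 0%N ->
  #|A| = M /\ #|B| = M.
Proof.
rewrite /split_weight -!sublist_mask !muln_eq0 !negb_or !eqb0 !negbK.
move=> /andP[/andP[/andP[/andP[/andP[/perm_size ksA /perm_size lsB] _] _] _] _].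
by rewrite -(size_sublist i) -(size_sublist j) -ksA -lsB !size_map_enum_ord.
Qed.

Lemma sum_split_weight_sets :
  (\sum_(A : {set 'I_N} | #|A| == M) \sum_(B : {set 'I_N} | #|B| == M)
     split_weight ii jj ks ls (mask_of_set A) (mask_of_set B)
   = \sum_(m <- masks N) \sum_(m' <- masks N) split_weight ii jj ks ls m m')%N.
Proof.
set w := split_weight ii jj ks ls.
rewrite -(big_sets_masks _ N (fun m => \sum_(m' <- masks N) w m m')%N) /=.
rewrite [RHS](bigID (fun A : {set 'I_N} => #|A| == M)) /=.
rewrite [X in (_ + X)%N]big1 ?addn0 => [|A nA].
  apply: eq_bigr => A _; rewrite -(big_sets_masks _ N (w (mask_of_set A))).
  rewrite [RHS](bigID (fun B : {set 'I_N} => #|B| == M)) /=.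
  rewrite [X in (_ + X)%N]big1 ?addn0 // => B nB.
  by apply/eqP; apply: contraNT nB => /split_weight_sets_neq0[_ /eqP].
rewrite -(big_sets_masks _ N (w (mask_of_set A))) big1 // => B _.
by apply/eqP; apply: contraNT nA => /split_weight_sets_neq0[/eqP].
Qed.

Lemma pdelta_sumE :
  ((N - M)`!)%:R / (N`!)%:R * ((M`!)%:R) ^+ 2 *
    \sum_(A : {set 'I_N} | #|A| == M) \sum_(B : {set 'I_N} | #|B| == M)
      pdelta R ks (sublist i A) * pdelta R ls (sublist j B) *
      pdelta R (sublist i (~: A)) (sublist j (~: B))
  = (N`!%:R)^-1 *
    (\sum_(m <- masks N) \sum_(m' <- masks N) split_weight ii jj ks ls m m')%:R.
Proof.
rewrite -sum_split_weight_sets natr_sum !mulr_sumr; apply: eq_bigr => A /eqP cA.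
rewrite natr_sum !mulr_sumr; apply: eq_bigr => B /eqP cB.
have cardC (X : {set 'I_N}) : #|X| = M -> #|~: X| = (N - M)%N.
  by move=> cX; have := cardsC X; rewrite card_ord cX; lia.
rewrite !pdeltaE ?size_sublist ?size_map_enum_ord ?cA ?cB ?cardC //.
rewrite /split_weight -!mask_of_setC -!sublist_mask !natrM; field.
by rewrite !fact_neq0.
Qed.

End MatrixElement.

Local Open Scope ring_scope.

Theorem lemma2 (R : rcfType) (N M : nat) (hM1 : (1 <= M)%N) (hMN : (M <= N)%N)
  (i j : 'I_N -> nat) (k l : 'I_M -> nat) :
  fdot (sym_state R i)
       (adags [seq k a | a <- enum 'I_M]
          (anns [seq l a | a <- enum 'I_M] (sym_state R j)))
  = ((N - M)`!)%:R / (N`!)%:R * ((M`!)%:R) ^+ 2 *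
    \sum_(A : {set 'I_N} | #|A| == M) \sum_(B : {set 'I_N} | #|B| == M)
      pdelta R [seq k a | a <- enum 'I_M] (sublist i A) *
      pdelta R [seq l a | a <- enum 'I_M] (sublist j B) *
      pdelta R (sublist i (~: A)) (sublist j (~: B)).
Proof.
rewrite matrix_elementE pdelta_sumE.
by rewrite (sum_split_weight _ _ (size_map_enum_ord i) (size_map_enum_ord j)).
Qed.
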